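(* Consider the following decoding setting (all notation is fixed in the context). Let $t_j = |\mathcal{A}_j|$ be the number of users transmitting in sub-block $j$, and run the index-collision-resolution procedure with the estimate $\hat{t}_j = t_j$. Assume that (no $E_1$) $t_j \le T$, and that (no $E_2$) whenever, during this run, the decoder $D$ of $\mathcal{C}$ is applied to a vector of the form $[\mathbf{c} + \tilde{\mathbf{z}}_j/2^{\ell}] \bmod 2$ with $\mathbf{c}\in\mathcal{C}$ and $\ell$ a nonnegative integer, it outputs $\mathbf{c}$. Then: (i) the list $\mathcal{L}_j(t_j)$ contains all indices $u \in \{1,\dots,n_p\}$ that were transmitted exactly once in sub-block $j$ (i.e., $|\{i\in\mathcal{A}_j : u_i = u\}| = 1$); (ii) $\hat{\mathbf{z}}_j(t_j) = \mathbf{z}_j$.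
   Context: Codes. Let $\mathbf{H}\in\{0,1\}^{m_p\times n_p}$ be a parity-check matrix of a binary linear code $\mathcal{C}_{\mathrm{aux}}$ of length $n_p$ with minimum Hamming distance $d$, and let $T=\lfloor (d-1)/2\rfloor$; denote the $u$-th column of $\mathbf{H}$ by $\mathbf{h}_u$. Let $\mathbf{G}\in\{0,1\}^{m_p\times n}$ be a generator matrix (full row rank) of a binary linear code $\mathcal{C}$ of length $n$ and dimension $m_p$. For $u\in\{1,\dots,n_p\}$ put $\mathbf{c}(u) = \mathbf{h}_u^T\mathbf{G} \bmod 2$ and define the real signal $\mathbf{x}(u)\in\mathbb{R}^n$ componentwise by $\mathbf{x}(u)_k = 2a(\mathbf{c}(u)_k - 1/2)$, where $a>0$ is a fixed constant. Channel. In sub-block $j$, a finite set $\mathcal{A}_j$ of users transmits; user $i\in\mathcal{A}_j$ chose an index $u_i\in\{1,\dots,n_p\}$ and sends $\mathbf{x}_{i,j}=\mathbf{x}(u_i)$. The received vector is $\mathbf{y}_j = \sum_{i\in\mathcal{A}_j}\mathbf{x}(u_i) + \mathbf{z}_j$ with $\mathbf{z}_j\in\mathbb{R}^n$ a noise vector; put $\tilde{\mathbf{z}}_j = \mathbf{z}_j/(2a)$. Here ''$\bmod 2$'' on real vectors is componentwise reduction into $[0,2)$. Basic decoder $\Phi$. For $\mathbf{y}\in\mathbb{R}^n$ and integer $\hat t\ge 0$, $\Phi(\mathbf{y},\hat t)$ is computed as: form $\tilde{\mathbf{y}} = [\mathbf{y}/(2a) + \hat t/2]\bmod 2$; apply a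 decoder $D$ for $\mathcal{C}$ to $\tilde{\mathbf{y}}$, obtaining a codeword $\tilde{\mathbf{c}}$ (or a flagged error); recover the unique $\tilde{\mathbf{h}}\in\{0,1\}^{m_p}$ with $\tilde{\mathbf{h}}^T\mathbf{G}=\tilde{\mathbf{c}} \bmod 2$; apply the bounded-distance syndrome decoder of $\mathcal{C}_{\mathrm{aux}}$, which returns the (unique) set $S\subseteq\{1,\dots,n_p\}$ with $|S|\le T$ and $\sum_{u\in S}\mathbf{h}_u = \tilde{\mathbf{h}} \bmod 2$ if such a set exists, and flags an error otherwise. $\Phi(\mathbf{y},\hat t)$ is the returned set $S$ (a list of indices); if any step flags an error, $\Phi$ returns $\emptyset$ and flags an error. Index-collision-resolution (ICR) procedure for an estimate $\hat t_j$: set $\mathbf{y}^{(1)}_j=\mathbf{y}_j$, $\hat t^{(1)}_j=\hat t_j$, $\mathcal{L}^{(1)}=\Phi(\mathbf{y}^{(1)}_j,\hat t^{(1)}_j)$. For $\ell\ge1$: if $|\mathcal{L}^{(\ell)}|=\hat t^{(\ell)}_j$, stop and return $\mathcal{L}^{(1)},\dots,\mathcal{L}^{(\ell)}$, setting $\tau=\ell$; if $|\mathcal{L}^{(\ell)}|>\hat t^{(\ell)}_j$, return an error; if $|\mathcal{L}^{(\ell)}|<\hat t^{(\ell)}_j$, set $\hat t^{(\ell+1)}_j=(\hat t^{(\ell)}_j-|\mathcal{L}^{(\ell)}|)/2$, return an error if this is not an integer, and otherwise set $\mathbf{y}^{(\ell+1)}_j = \big(\mathbf{y}^{(\ell)}_j-\sum_{u\in\mathcal{L}^{(\ell)}}\mathbf{x}(u)\big)/2$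 and $\mathcal{L}^{(\ell+1)}=\Phi(\mathbf{y}^{(\ell+1)}_j,\hat t^{(\ell+1)}_j)$, and continue. If no error is returned, the outputs are $\mathcal{L}_j(\hat t_j)=\mathcal{L}^{(1)}\setminus\bigcup_{\ell=2}^{\tau}\mathcal{L}^{(\ell)}$ and $\hat{\mathbf{z}}_j(\hat t_j)=\mathbf{y}_j-\sum_{\ell=1}^{\tau}2^{\ell-1}\sum_{u\in\mathcal{L}^{(\ell)}}\mathbf{x}(u)$. *)

From mathcomp Require Import all_boot all_order all_algebra.
From mathcomp Require Import reals.
Set Implicit Arguments. Unset Strict Implicit. Unset Printing Implicit Defensive.
Import Order.TTheory GRing.Theory Num.Theory.
Local Open Scope ring_scope.

Section ICR.
Context {R : realType} (a : R) {m_p n_p n : nat}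
  (H : 'M['F_2]_(m_p, n_p)) (G : 'M['F_2]_(m_p, n)).

Definition bitR (b : 'F_2) : R := (nat_of_ord b)%:R.

Definition mod2 (x : R) : R := x - 2 * (Num.floor (x / 2))%:~R.

Definition wt (x : 'cV['F_2]_n_p) : nat := #|[set i | x i 0 != 0]|.
Definition min_distance (d : nat) : Prop :=
  (exists x : 'cV['F_2]_n_p, x != 0 /\ H *m x = 0 /\ wt x = d) /\
  (forall x : 'cV['F_2]_n_p, x != 0 -> H *m x = 0 -> (d <= wt x)%N).

Definition in_code (c : 'rV['F_2]_n) : Prop := exists h : 'rV['F_2]_m_p, c = h *m G.

(* c(u) = h_u^T G and x(u)_k = 2a (c(u)_k - 1/2);  indices u are 0-based *)
Definition codeword (u : 'I_n_p) : 'rV['F_2]_n := (col u H)^T *m G.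
Definition xsig (u : 'I_n_p) : 'rV[R]_n :=
  \row_k (2 * a * (bitR (codeword u 0 k) - 1 / 2)).

Definition phi_input (y : 'rV[R]_n) (th : nat) : 'rV[R]_n :=
  \row_k mod2 (y 0 k / (2 * a) + th%:R / 2).

Context (T : nat) (D : 'rV[R]_n -> option 'rV['F_2]_n).

(* basic decoder Phi; on any flagged error it returns the empty set *)
Definition Phi (y : 'rV[R]_n) (th : nat) : {set 'I_n_p} :=
  match D (phi_input y th) with
  | None => set0
  | Some c =>
    match [pick h : 'rV['F_2]_m_p | h *m G == c] with
    | None => set0
    | Some h =>
      match [pick S0 : {set 'I_n_p} |
               (#|S0| <= T)%N && (\sum_(u in S0) col u H == h^T)] with
      | None => set0
      | Some S0 => S0
      end
    end
  end.

(* ICR procedure with fuel: returns the list of states (y^(l), th^(l)) at which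
   Phi was called, and Some [L^(1); ...; L^(tau)] or None (error). *)
Fixpoint icr_run (fuel : nat) (y : 'rV[R]_n) (th : nat)
  : seq ('rV[R]_n * nat) * option (seq {set 'I_n_p}) :=
  let L := Phi y th in
  if #|L| == th then ([:: (y, th)], Some [:: L])
  else if (th < #|L|)%N then ([:: (y, th)], None)
  else if odd (th - #|L|) then ([:: (y, th)], None)
  else match fuel with
       | 0 => ([:: (y, th)], None)
       | fuel'.+1 =>
         let r := icr_run fuel' ((1 / 2) *: (y - \sum_(u in L) xsig u))
                               ((th - #|L|)./2) in
         ((y, th) :: r.1, omap (cons L) r.2)
       end.

(* fuel th.+1 suffices: th strictly decreases along a continuing run *)
Definition icr_lists (y : 'rV[R]_n) (th : nat) := (icr_run th.+1 y th).2.
Definition icr_D_inputs (y : 'rV[R]_n) (th : nat) : seq 'rV[R]_n :=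
  [seq phi_input p.1 p.2 | p <- (icr_run th.+1 y th).1].

Definition L_out (Ls : seq {set 'I_n_p}) : {set 'I_n_p} :=
  head set0 Ls :\: \bigcup_(S0 <- behead Ls) S0.
Definition zhat (y : 'rV[R]_n) (Ls : seq {set 'I_n_p}) : 'rV[R]_n :=
  y - \sum_(l < size Ls) (2 ^+ l : R) *: \sum_(u in nth set0 Ls l) xsig u.

End ICR.

From mathcomp Require Import all_boot all_order all_algebra.
From mathcomp Require Import reals.
From mathcomp Require Import ring zify.
Import Order.TTheory GRing.Theory Num.Theory.
Set Implicit Arguments. Unset Strict Implicit. Unset Printing Implicit Defensive.
Local Open Scope ring_scope.

(* If index u is sent m_u times, then y/(2a) + t/2 = sum_u m_u c(u) + zt over the reals,
   so the decoder D sees the codeword (sum_u m_u h_u)^T G plus the noise, and the syndrome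
   sum_u m_u h_u mod 2 is that of the at most T indices of odd multiplicity; bounded-distance
   decoding therefore returns exactly {u | m_u odd}.  Subtracting their signals and halving
   gives the same situation with multiplicities m_u/2 and noise zt/2, so the ICR procedure
   reads off the binary digits of the multiplicities: an index sent once occurs in the first
   list only, and the weighted subtraction removes exactly sum_u m_u x(u), leaving z. *)

Section Mod2.
Variable R : realType.

Lemma mod2_add2n (x : R) (k : nat) : mod2 (x + 2 * k%:R) = mod2 x.
Proof.
rewrite /mod2 (_ : (x + 2 * k%:R) / 2 = x / 2 + k%:R); last by field.
rewrite floorDrz ?natr_int // -[k%:R]/((k%:Z)%:~R : R) intrKfloor.
by rewrite rmorphD /=; ring.
Qed.

Lemma mod2_natD (N : nat) (x : R) : mod2 (N%:R + x) = mod2 ((odd N)%:R + x).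
Proof.
rewrite -{1}(odd_double_half N) -muln2 natrD natrM -addrA [_ * 2]mulrC.
by rewrite [_ * _ + x]addrC addrA mod2_add2n.
Qed.

Lemma bitR_natr (N : nat) : bitR (N%:R : 'F_2) = (odd N)%:R :> R.
Proof. by rewrite /bitR val_Fp_nat // modn2. Qed.

End Mod2.

Lemma F2_natr_odd (N : nat) : (N%:R : 'F_2) = (odd N)%:R.
Proof. by apply: val_inj; rewrite /= !val_Fp_nat // modn2; case: odd. Qed.

Lemma sum_natrZ_F2 (I : finType) (V : lmodType 'F_2) (m : I -> nat) (v : I -> V) :
  \sum_u (m u)%:R *: v u = \sum_(u in [set u | odd (m u)]) v u.
Proof.
rewrite [RHS]big_mkcond /=; apply: eq_bigr => u _.
by rewrite inE F2_natr_odd; case: odd; rewrite ?scale1r ?scale0r.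
Qed.

Section Multiplicities.
Variable I : finType.
Implicit Types m : I -> nat.

Lemma sumn_odd_half m :
  (\sum_u m u = #|[set u | odd (m u)]| + (\sum_u (m u)./2).*2)%N.
Proof.
rewrite -sum1_card [in RHS]big_mkcond /= -muln2 big_distrl -big_split /=.
by apply: eq_bigr => u _; rewrite inE muln2 -[in LHS](odd_double_half (m u)); case: odd.
Qed.

Lemma card_odd_le_sum m : (#|[set u | odd (m u)]| <= \sum_u m u)%N.
Proof. by rewrite sumn_odd_half leq_addr. Qed.

Lemma sum_natrZ_odd_half (S : pzRingType) (V : lmodType S) m (v : I -> V) :
  \sum_u (m u)%:R *: v u =
  \sum_(u in [set u | odd (m u)]) v u + 2 *: \sum_u ((m u)./2)%:R *: v u.
Proof.
rewrite [in RHS]big_mkcond scaler_sumr -big_split /=; apply: eq_bigr => u _.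
rewrite inE scalerA -natrM -[in LHS](odd_double_half (m u)) natrD scalerDl.
by rewrite -mul2n; case: odd; rewrite ?scale1r ?scale0r.
Qed.

Lemma card_fibres (U : finType) (A : {set U}) (idx : U -> I) :
  #|A| = (\sum_u #|[set i in A | idx i == u]|)%N.
Proof.
rewrite -sum1_card (partition_big idx predT) //=; apply: eq_bigr => u _.
by rewrite -sum1_card; apply: eq_bigl => i; rewrite inE.
Qed.

Lemma sum_fibres (S : pzRingType) (V : lmodType S) (U : finType) (A : {set U})
    (idx : U -> I) (v : I -> V) :
  \sum_(i in A) v (idx i) = \sum_u #|[set i in A | idx i == u]|%:R *: v u.
Proof.
rewrite (partition_big idx predT) //=; apply: eq_bigr => u _.
rewrite (eq_bigr (fun=> v u)) => [|i /andP[_ /eqP ->] //].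
by rewrite scaler_nat -sumr_const; apply: eq_bigl => i; rewrite inE.
Qed.

End Multiplicities.

Section Syndrome.
Variables (m_p n_p : nat) (H : 'M['F_2]_(m_p, n_p)).

Definition indic (S : {set 'I_n_p}) : 'cV['F_2]_n_p := \col_i (i \in S)%:R.

Lemma indic_inj : injective indic.
Proof.
move=> S S' /colP eqSS'; apply/setP => i; have := eqSS' i; rewrite !mxE.
by case: (i \in S); case: (i \in S').
Qed.

Lemma mul_indic S : H *m indic S = \sum_(u in S) col u H.
Proof.
apply/colP => j; rewrite !mxE summxE [in RHS]big_mkcond /=; apply: eq_bigr => i _.
by rewrite !mxE; case: (i \in S); rewrite ?mulr1 ?mulr0.
Qed.

Lemma wt_gt0 (x : 'cV['F_2]_n_p) : x != 0 -> (0 < wt x)%N.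
Proof.
move=> xn0; rewrite /wt card_gt0; apply: contraNneq xn0 => x0.
apply/eqP/colP => i; rewrite mxE; apply/eqP/negPn/negP => xi.
by have := in_set0 i; rewrite -x0 inE xi.
Qed.

Lemma wt_indicB S S' : (wt (indic S - indic S') <= #|S| + #|S'|)%N.
Proof.
apply: leq_trans (leq_subr #|S :&: S'| _); rewrite -cardsU subset_leq_card //.
apply/subsetP => i; rewrite !inE !mxE.
by case: (i \in S); case: (i \in S').
Qed.

Lemma syndrome_inj (d : nat) (S S' : {set 'I_n_p}) :
  min_distance H d -> (#|S| <= (d.-1)./2)%N -> (#|S'| <= (d.-1)./2)%N ->
  \sum_(u in S) col u H = \sum_(u in S') col u H -> S = S'.
Proof.
move=> [_ mdH] leS leS' eqHS.
have [/subr0_eq/indic_inj // | nz] := eqVneq (indic S - indic S') 0.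
have := mdH (indic S - indic S') nz; rewrite mulmxBr !mul_indic eqHS subrr => /(_ erefl).
by have := wt_gt0 nz; have := wt_indicB S S'; lia.
Qed.

End Syndrome.

Section Decoding.
Variables (R : realType) (a : R) (m_p n_p n : nat).
Variables (H : 'M['F_2]_(m_p, n_p)) (G : 'M['F_2]_(m_p, n)) (d : nat).
Variable D : 'rV[R]_n -> option 'rV['F_2]_n.
Hypotheses (a_gt0 : 0 < a) (G_free : row_free G) (H_dist : min_distance H d).

Local Notation T := (d.-1)./2.
Local Notation x := (xsig a H G).

Lemma codeword_sum (m : 'I_n_p -> nat) :
  (\sum_u (m u)%:R *: col u H)^T *m G = \sum_u (m u)%:R *: codeword H G u.
Proof.
rewrite linear_sum mulmx_suml; apply: eq_bigr => u _.
by rewrite linearZ /= -scalemxAl.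
Qed.

Lemma phi_input_multiset (m : 'I_n_p -> nat) (w : 'rV[R]_n) :
  phi_input a (\sum_u (m u)%:R *: x u + w) (\sum_u m u) =
  \row_k mod2 (bitR ((\sum_u (m u)%:R *: codeword H G u) 0 k) + w 0 k / (2 * a)).
Proof.
apply/rowP => k; rewrite !mxE.
pose N := (\sum_u m u * codeword H G u 0%R k)%N.
have -> : (\sum_u (m u)%:R *: codeword H G u) 0 k = N%:R.
  by rewrite summxE natr_sum; apply: eq_bigr => u _; rewrite !mxE natrM natr_Zp.
rewrite bitR_natr -mod2_natD; congr mod2.
rewrite summxE natr_sum
  (eq_bigr (fun u => 2 * a * (m u * codeword H G u 0%R k)%:R - a * (m u)%:R)).
  by rewrite sumrB -!mulr_sumr -!natr_sum; field; rewrite gt_eqF.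
by move=> u _; rewrite 2!mxE natrM /bitR; field.
Qed.

Lemma Phi_decoded (y : 'rV[R]_n) (th : nat) (h : 'rV['F_2]_m_p) (S : {set 'I_n_p}) :
  D (phi_input a y th) = Some (h *m G) -> (#|S| <= T)%N ->
  \sum_(u in S) col u H = h^T -> Phi a H G T D y th = S.
Proof.
move=> Dy leST hS; rewrite /Phi Dy.
case: pickP => [h' /eqP/(row_free_inj G_free) -> | /(_ h)]; last by rewrite eqxx.
case: pickP => [S' /andP[leS'T /eqP hS'] | /(_ S)]; last by rewrite leST hS eqxx.
by apply: (syndrome_inj H_dist leS'T leST); rewrite hS' hS.
Qed.

Lemma Phi_multiset (m : 'I_n_p -> nat) (w : 'rV[R]_n) :
  let y := \sum_u (m u)%:R *: x u + w in
  (\sum_u m u <= T)%N ->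
  (forall c, in_code G c ->
     phi_input a y (\sum_u m u) = \row_k mod2 (bitR (c 0 k) + w 0 k / (2 * a)) ->
     D (phi_input a y (\sum_u m u)) = Some c) ->
  Phi a H G T D y (\sum_u m u) = [set u | odd (m u)].
Proof.
move=> y leT decD; set h := \sum_u (m u)%:R *: col u H.
have Dy : D (phi_input a y (\sum_u m u)) = Some (h^T *m G).
  by apply: decD; [exists h^T | rewrite codeword_sum phi_input_multiset].
apply: Phi_decoded Dy (leq_trans (card_odd_le_sum m) leT) _.
by rewrite trmxK /h sum_natrZ_F2.
Qed.

Lemma icr_run_start fuel y th : (y, th) \in (icr_run a H G T D fuel y th).1.
Proof. by case: fuel => [|f] /=; repeat case: ifP => _; rewrite mem_head. Qed.

Lemma icr_run_stop fuel y th :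
  #|Phi a H G T D y th| = th ->
  (icr_run a H G T D fuel y th).2 = Some [:: Phi a H G T D y th].
Proof. by case: fuel => [|f] /= ->; rewrite eqxx. Qed.

Lemma icr_run_continue f y th (L := Phi a H G T D y th) :
  (#|L| < th)%N -> ~~ odd (th - #|L|) ->
  let r := icr_run a H G T D f ((1 / 2) *: (y - \sum_(u in L) x u)) ((th - #|L|)./2) in
  icr_run a H G T D f.+1 y th = ((y, th) :: r.1, omap (cons L) r.2).
Proof. by move=> ltLth evenL /=; rewrite -/L ltn_eqF // ltnNge ltnW //= (negbTE evenL). Qed.

Lemma zhat_cons y S Ls :
  zhat a H G y (S :: Ls) = 2 *: zhat a H G ((1 / 2) *: (y - \sum_(u in S) x u)) Ls.
Proof.
rewrite /zhat big_ord_recl expr0 scale1r scalerBr scalerA div1r mulfV ?pnatr_eq0 //.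
rewrite scale1r opprD addrA scaler_sumr; congr (_ - _); apply: eq_bigr => i _.
by rewrite lift0 exprS scalerA.
Qed.

Variable z : 'rV[R]_n.

Definition decodes_noise (v : 'rV[R]_n) : Prop :=
  forall c, in_code G c -> forall l : nat,
    v = \row_k mod2 (bitR (c 0 k) + ((2 * a)^-1 *: z) 0 k / 2 ^+ l) -> D v = Some c.

Definition run_inputs fuel y th :=
  [seq phi_input a p.1 p.2 | p <- (icr_run a H G T D fuel y th).1].

Definition run_correct (m : 'I_n_p -> nat) (l : nat) y (run : option (seq {set 'I_n_p})) :=
  exists2 Ls, run = Some Ls &
    [/\ forall S u, S \in Ls -> u \in S -> m u != 0%N,
        forall u, m u = 1%N -> u \in L_out Ls &
        zhat a H G y Ls = (2 ^+ l)^-1 *: z].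

Section Run.
Variables (l : nat) (m : 'I_n_p -> nat).
Let y := \sum_u (m u)%:R *: x u + (2 ^+ l)^-1 *: z.
Let th := (\sum_u m u)%N.
Let S1 := [set u | odd (m u)].

Lemma Phi_run_start fuel :
  (th <= T)%N -> {in run_inputs fuel y th, forall v, decodes_noise v} ->
  Phi a H G T D y th = S1.
Proof.
move=> leT decD; apply: Phi_multiset => // c cc eq_in.
apply: decD cc l _; first exact: map_f (icr_run_start _ _ _).
rewrite eq_in; apply/rowP => k; rewrite !mxE; congr (mod2 (_ + _)).
by field; rewrite expf_neq0 ?pnatr_eq0 ?gt_eqF.
Qed.

Lemma icr_run_stop_correct fuel :
  Phi a H G T D y th = S1 -> #|S1| = th ->
  run_correct m l y (icr_run a H G T D fuel y th).2.
Proof.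
move=> PhiE cardS1; exists [:: S1]; first by rewrite icr_run_stop PhiE.
have half0 u : (m u)./2 = 0%N.
  have /eqP := sumn_odd_half m; rewrite -/th -cardS1 -{1}[#|S1|]addn0 eqn_add2l.
  by rewrite eq_sym double_eq0 sum_nat_eq0 => /forallP /(_ u) /eqP.
split.
- by move=> S u; rewrite inE => /eqP ->; rewrite inE; apply: contraTneq => ->.
- by move=> u mu1; rewrite /L_out /= big_nil setD0 inE mu1.
rewrite zhat_cons /zhat big_ord0 subr0 scalerA div1r mulfV ?pnatr_eq0 // scale1r.
rewrite /y sum_natrZ_odd_half -/S1 [in 2 *: _]big1 => [|u _]; last by rewrite half0 scale0r.
by rewrite scaler0 addr0 addrC addKr.
Qed.

Let half_m u := (m u)./2.

Lemma halve_residual :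
  (1 / 2) *: (y - \sum_(u in S1) x u) =
  \sum_u (half_m u)%:R *: x u + (2 ^+ l.+1)^-1 *: z.
Proof.
rewrite /y sum_natrZ_odd_half -/S1 addrC !addrA addNr add0r scalerDr !scalerA.
by rewrite div1r mulVf ?pnatr_eq0 // scale1r exprS invfM.
Qed.

Lemma icr_run_continue_odd f :
  Phi a H G T D y th = S1 -> (#|S1| < th)%N ->
  let r := icr_run a H G T D f (\sum_u (half_m u)%:R *: x u + (2 ^+ l.+1)^-1 *: z)
                               (\sum_u half_m u) in
  icr_run a H G T D f.+1 y th = ((y, th) :: r.1, omap (cons S1) r.2).
Proof.
move=> PhiE ltS1.
have thE : (th - #|S1| = (\sum_u half_m u).*2)%N by rewrite /th sumn_odd_half addKn.
by rewrite icr_run_continue PhiE ?thE ?odd_double ?doubleK -?halve_residual.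
Qed.

Lemma run_correct_cons run :
  run_correct half_m l.+1 (\sum_u (half_m u)%:R *: x u + (2 ^+ l.+1)^-1 *: z) run ->
  run_correct m l y (omap (cons S1) run).
Proof.
move=> [Ls -> [inLs outLs zhatLs]]; exists (S1 :: Ls) => //; split.
- move=> S u; rewrite inE => /orP[/eqP -> | SLs uS].
    by rewrite inE; apply: contraTneq => ->.
  by apply: contra_neq (inLs S u SLs uS); rewrite /half_m => ->.
- move=> u mu1; rewrite /L_out /= inE [u \in S1]inE mu1 andbT bigcup_seq.
  by apply/bigcupP => -[S SLs uS]; have := inLs S u SLs uS; rewrite /half_m mu1.
rewrite zhat_cons halve_residual zhatLs scalerA exprS invfM mulrA mulfV ?pnatr_eq0 //.
by rewrite mul1r.
Qed.

End Run.

Lemma icr_run_correct fuel l (m : 'I_n_p -> nat) :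
  let y := \sum_u (m u)%:R *: x u + (2 ^+ l)^-1 *: z in
  let th := (\sum_u m u)%N in
  (th <= fuel)%N -> (th <= T)%N ->
  {in run_inputs fuel y th, forall v, decodes_noise v} ->
  run_correct m l y (icr_run a H G T D fuel y th).2.
Proof.
elim: fuel l m => [|f IH] l m y th le_fuel leT decD;
  have PhiE := Phi_run_start leT decD;
  have := card_odd_le_sum m; rewrite leq_eqVlt => /orP[/eqP stop | cont].
all: try exact: icr_run_stop_correct.
  by move: cont le_fuel; rewrite /th; lia.
have thE := sumn_odd_half m; rewrite -/th in thE.
rewrite /y /th icr_run_continue_odd //; apply/run_correct_cons/IH.
- by move: le_fuel cont; rewrite thE; lia.
- by apply: leq_trans leT; rewrite thE -addnn addnA leq_addl.
move=> v vin; apply: decD.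
by rewrite /run_inputs icr_run_continue_odd //= inE vin orbT.
Qed.

End Decoding.

Theorem theorem1 (R : realType) (a : R) (m_p n_p n : nat)
  (H : 'M['F_2]_(m_p, n_p)) (G : 'M['F_2]_(m_p, n)) (d : nat)
  (D : 'rV[R]_n -> option 'rV['F_2]_n)
  (U : finType) (A : {set U}) (uidx : U -> 'I_n_p) (z : 'rV[R]_n) :
  0 < a -> row_free G -> min_distance H d ->
  let T := (d.-1)./2 in
  let y := \sum_(i in A) xsig a H G (uidx i) + z in
  let zt := (2 * a)^-1 *: z in
  (#|A| <= T)%N ->
  (forall v, v \in icr_D_inputs a H G T D y #|A| ->
     forall c, in_code G c -> forall l : nat,
       v = \row_k mod2 (bitR (c 0 k) + zt 0 k / 2 ^+ l) -> D v = Some c) ->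
  exists Ls, icr_lists a H G T D y #|A| = Some Ls /\
    (forall u : 'I_n_p, #|[set i in A | uidx i == u]| = 1%N -> u \in L_out Ls) /\
    zhat a H G y Ls = z.
Proof.
move=> a_gt0 G_free H_dist T y zt leT decD.
pose m u := #|[set i in A | uidx i == u]|.
have yE : y = \sum_u (m u)%:R *: xsig a H G u + (2 ^+ 0)^-1 *: z.
  by rewrite expr0 invr1 scale1r /y sum_fibres.
have := icr_run_correct (D := D) a_gt0 G_free H_dist (z := z)
  (fuel := #|A|.+1) (l := 0) (m := m).
rewrite -yE -card_fibres => /(_ (leqnSn _) leT decD) [Ls runE [_ outLs zhatLs]].
by exists Ls; rewrite zhatLs expr0 invr1 scale1r.
Qed.
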